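(* (1) For the $A_r$ $Q$-system with initial data $R_{\alpha,0}=R_{\alpha,1}=1$ for all $\alpha\in I_r$, $$\sum_{n\ge0}R_{1,n}t^n=1+t\,\frac{P_r(t)}{P_{r+1}(t)},\qquad P_m(t)=t^{m/2}\,U_m\!\left(\tfrac1{\sqrt t}-\sqrt t\right),$$ where $U_m$ is the Chebyshev polynomial of the second kind, $U_m(2\cos\theta)=\frac{\sin(m+1)\theta}{\sin\theta}$ (each $P_m$ is a polynomial in $t$). (2) For the $A_{\infty/2}$ $Q$-system with initial data $R_{\alpha,0}=R_{\alpha,1}=1$ for all $\alpha\ge1$, $$\sum_{n\ge0}R_{1,n}t^n=\frac{3-t-\sqrt{1-6t+t^2}}{2}=1+t+2t^2+6t^3+22t^4+90t^5+\cdots,$$ i.e. $R_{1,n}$ is the large Schröder number $S_{n-1}$ for $n\ge1$.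
   Context: For $r\ge1$, $I_r=\{1,\dots,r\}$, the $A_r$ $Q$-system is the family $(R_{\alpha,n})_{0\le\alpha\le r+1,n\in\mathbb Z}$ with $R_{0,n}=R_{r+1,n}=1$ and $R_{\alpha,n+1}R_{\alpha,n-1}=R_{\alpha,n}^2+R_{\alpha+1,n}R_{\alpha-1,n}$ for $\alpha\in I_r$, $n\in\mathbb Z$, determined by the values $R_{\alpha,0},R_{\alpha,1}$. The $A_{\infty/2}$ $Q$-system is the family $(R_{\alpha,n})_{\alpha\ge0,n\in\mathbb Z}$ with $R_{0,n}=1$ and the same relation for all $\alpha\ge1$ (no upper boundary condition), determined by $R_{\alpha,0},R_{\alpha,1}$ for $\alpha\ge1$. With the stated unit initial data all values are positive rational numbers. *)

From HB Require Import structures.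
From mathcomp Require Import all_boot all_order all_algebra.
Set Implicit Arguments. Unset Strict Implicit. Unset Printing Implicit Defensive.
Import Order.TTheory GRing.Theory Num.Theory.
Local Open Scope ring_scope.

(* Formal power series over rat are represented by their coefficient
   sequences nat -> rat; [fps_mul f g] is the Cauchy product. *)
Definition fps_mul (f g : nat -> rat) (k : nat) : rat :=
  \sum_(i < k.+1) f i * g (k - i)%N.

Definition is_fps_sqrt (s f : nat -> rat) : Prop :=
  s 0%N = 1 /\ forall k, fps_mul s s k = f k.

(* Chebyshev polynomials of the second kind, normalised by
   U_m(2 cos th) = sin((m+1) th) / sin th:
   U_0 = 1, U_1 = X, U_{m+2} = X U_{m+1} - U_m. *)
Fixpoint chebU_pair (m : nat) : {poly rat} * {poly rat} :=
  match m with
  | 0%N => (1, 'X)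
  | m'.+1 => let: (a, b) := chebU_pair m' in (b, 'X * b - a)
  end.
Definition chebU (m : nat) : {poly rat} := (chebU_pair m).1.

(* P_m(t) = t^{m/2} U_m(1/sqrt t - sqrt t).  Since U_m has the parity of m,
   U_m(x) = sum_i c_i x^i with c_i = 0 unless m - i is even, and
   t^{m/2} x^i = t^{(m-i)/2} (1-t)^i for x = (1-t)/sqrt t.  This is the
   literal expansion of the definition as a polynomial in t. *)
Definition chebP (m : nat) : {poly rat} :=
  \sum_(i < m.+1) (chebU m)`_i *: ('X ^+ (m - i)./2 * (1 - 'X) ^+ i).

Definition is_Ar_Qsystem (r : nat) (R : nat -> int -> rat) : Prop :=
  (forall n, R 0%N n = 1) /\ (forall n, R r.+1 n = 1) /\
  (forall (a : nat) (n : int), (1 <= a <= r)%N ->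
     R a (n + 1) * R a (n - 1) = R a n ^+ 2 + R a.+1 n * R a.-1 n).

Definition is_Ainf_Qsystem (R : nat -> int -> rat) : Prop :=
  (forall n, R 0%N n = 1) /\
  (forall (a : nat) (n : int), (1 <= a)%N ->
     R a (n + 1) * R a (n - 1) = R a n ^+ 2 + R a.+1 n * R a.-1 n).

From HB Require Import structures.
From mathcomp Require Import all_boot all_order all_algebra.
From mathcomp Require Import ring zify.
Set Implicit Arguments. Unset Strict Implicit. Unset Printing Implicit Defensive.
Import Order.TTheory GRing.Theory Num.Theory.
Local Open Scope ring_scope.

(* Part (1), by continued fractions.  At time n the values of the Q-system give
   weights p_a, q_a (1 <= a <= r+1) [wp, wq]; the continuant with diagonal
   entries 1 - p_a t and off-diagonal products q_a t [cont] is the denominator of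
   a continued fraction for sum_i R_{1,n+i} t^i.  One time step acts on the
   weights by a mutation, and a general identity for continuants under mutation
   [cont_mutation] shows that the full continuant is conserved [qcont_invariant]
   while the continuant of the window [2, r+1] obeys a one-step recursion
   [qcont_step]; telescoping [fps_mul_telescope] yields the generating function.
   For unit initial data all weights at time 0 equal 1, and then the continuants
   are the polynomials P_m [cont_unit_weights].

   Part (2).  Inside the light cone a + n <= N + 1 the A_{oo/2} solution agrees
   with the A_N one [cone_agreement], so its truncated generating function G
   satisfies the identity of part (1) modulo t^M for two consecutive N
   [Ainf_truncation]; eliminating the P_m gives (3 - t - 2G)^2 = 1 - 6t + t^2
   modulo t^M [Ainf_square]. *)

Lemma fps_mul_coefM (A B : {poly rat}) k :
  fps_mul (fun i => A`_i) (fun i => B`_i) k = (A * B)`_k.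
Proof. by rewrite coefM. Qed.

Lemma fps_mul_eq (a a' b b' : nat -> rat) k :
  (forall i, (i <= k)%N -> a i = a' i) -> (forall i, (i <= k)%N -> b i = b' i) ->
  fps_mul a b k = fps_mul a' b' k.
Proof.
move=> ha hb; apply: eq_bigr => i _.
by rewrite ha ?hb ?leq_subr // -ltnS.
Qed.

Lemma fps_mul_telescope (E : {poly rat}) (c : nat -> rat) (H : nat -> {poly rat}) :
  (forall n, H n = c n *: E + 'X * H n.+1) ->
  forall k n, fps_mul (fun i => E`_i) (fun i => c (n + i)%N) k = (H n)`_k.
Proof.
move=> HE; elim=> [|k IH] n; rewrite HE coefD coefZ coefXM /=.
  by rewrite /fps_mul big_ord1 addn0 addr0 mulrC.
rewrite -IH /fps_mul big_ord_recr /= subnn addn0 addrC mulrC; congr (_ + _).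
by apply: eq_bigr => i _; rewrite /= subSn ?addSnnS // -ltnS.
Qed.

Lemma dvdXnP (N : nat) (p : {poly rat}) :
  reflect (forall j, (j < N)%N -> p`_j = 0) ('X^N %| p).
Proof.
apply: (iffP (modp_eq0P p 'X^N)); rewrite -Pdiv.IdomainMonic.take_poly_modp => hp.
  by move=> j hj; have := coef_take_poly N p j; rewrite hj hp coef0.
by apply/polyP => j; rewrite coef_take_poly coef0; case: ifP => // /hp.
Qed.

Lemma dvdXn_cancel (N : nat) (u v : {poly rat}) :
  u`_0 != 0 -> 'X^N %| u * v -> 'X^N %| v.
Proof.
move=> u0; rewrite Gauss_dvdpr // coprimep_expl // coprimep_sym coprimepX.
by rewrite rootE horner_coef0.
Qed.

Lemma chebU_rec m : chebU m.+2 = 'X * chebU m.+1 - chebU m.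
Proof. by rewrite /chebU /=; case: (chebU_pair m). Qed.

Lemma chebU_coef_high m i : (m < i)%N -> (chebU m)`_i = 0.
Proof.
elim/ltn_ind: m i => -[|[|m]] IH i hi.
- by rewrite coef1; case: i hi.
- by rewrite coefX; case: i hi => [|[|]].
- rewrite chebU_rec coefB coefXM !IH //; try lia.
  by case: (i == 0%N); rewrite subr0.
Qed.

Definition chebP_term (m i : nat) : {poly rat} := 'X ^+ (m - i)./2 * (1 - 'X) ^+ i.

Lemma chebP_widen m K : (m < K)%N ->
  chebP m = \sum_(i < K) (chebU m)`_i *: chebP_term m i.
Proof.
elim: K => [//|K IH] hK; have [hmK|] := ltnP m K; last first.
  by rewrite /chebP => hKm; have -> : K = m by lia.
by rewrite big_ord_recr /= chebU_coef_high // scale0r addr0 IH.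
Qed.

Lemma chebP_rec m : chebP m.+2 = (1 - 'X) * chebP m.+1 - 'X * chebP m.
Proof.
have shifted : (1 - 'X) * chebP m.+1 =
    \sum_(i < m.+3) ('X * chebU m.+1)`_i *: chebP_term m.+2 i.
  rewrite big_ord_recl coefXM /= (@chebP_widen m.+1 m.+2) ?mulr_sumr //.
  rewrite scale0r add0r; apply: eq_bigr => i _.
  rewrite coefXM /= /chebP_term subSS exprS -scalerAr; congr (_ *: _).
  by rewrite mulrCA.
have lowered : 'X * chebP m = \sum_(i < m.+3) (chebU m)`_i *: chebP_term m.+2 i.
  rewrite (@chebP_widen m m.+3) ?mulr_sumr; last by lia.
  apply: eq_bigr => i _.
  have [hi|hi] := leqP i m; last by rewrite chebU_coef_high // !scale0r mulr0.
  rewrite /chebP_term (_ : (m.+2 - i = (m - i).+2)%N); last by lia.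
  by rewrite /= exprS -mulrA -scalerAr.
rewrite shifted lowered -sumrB (@chebP_widen m.+2 m.+3) //.
apply: eq_bigr => i _.
by rewrite chebU_rec coefB scalerBl.
Qed.

Lemma chebP0 : chebP 0 = 1.
Proof. by rewrite /chebP big_ord1 coef1 scale1r mulr1. Qed.

Lemma chebP1 : chebP 1 = 1 - 'X.
Proof. by rewrite /chebP big_ord_recr big_ord1 /= !coefX /= scale0r add0r scale1r mul1r. Qed.

Lemma chebP_coef0 m : (chebP m)`_0 = 1.
Proof.
elim/ltn_ind: m => -[|[|m]] IH; first by rewrite chebP0 coef1.
  by rewrite chebP1 coefB coef1 coefX subr0.
by rewrite chebP_rec coefB mulrBl mul1r coefB !coefXM /= !subr0 IH.
Qed.

Section Continuants.
Variables (A : comPzRingType) (x : A).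

(* [cont p q j len] is the continuant of the window [j, j + len) of weights:
   the determinant of the tridiagonal matrix with diagonal entries 1 - p_i x
   and off-diagonal products q_i x, expanded from the bottom index j.  The
   weight q at the top of the window does not enter. *)
Fixpoint cont (p q : nat -> A) (j len : nat) {struct len} : A :=
  match len with
  | 0 => 1
  | len'.+1 =>
      match len' with
      | 0 => 1 - p j * x
      | l.+1 => (1 - p j * x) * cont p q j.+1 len' - q j * x * cont p q j.+2 l
      end
  end.

Lemma cont_SS p q j l :
  cont p q j l.+2 = (1 - p j * x) * cont p q j.+1 l.+1 - q j * x * cont p q j.+2 l.
Proof. by []. Qed.

Lemma cont_ext p q p' q' j len :
  (forall i, j <= i < j + len -> p i = p' i)%N ->
  (forall i, j <= i < (j + len).-1 -> q i = q' i)%N ->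
  cont p q j len = cont p' q' j len.
Proof.
elim/ltn_ind: len j => -[|[|l]] IH j hp hq; [by [] | by rewrite /= hp //; lia |].
rewrite !cont_SS hp ?hq ?(IH l.+1) ?(IH l) // => [i hi|i hi|i hi|i hi||];
  rewrite ?hp ?hq //; lia.
Qed.
End Continuants.

Lemma cont_unit_weights j len :
  cont 'X (fun _ => 1) (fun _ => 1) j len = chebP len.
Proof.
elim/ltn_ind: len j => -[|[|l]] IH j; first by rewrite chebP0.
  by rewrite /= chebP1 mul1r.
by rewrite cont_SS !IH //= chebP_rec !mul1r.
Qed.

(* Mutation of the weights (p, q) on [0, T] with sums s_i = p_i + q_i into
   (p', q') with p'_{i+1} s_i = p_i s_{i+1} and q'_{i+1} s_{i+1} = q_{i+1} s_{i+2}: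
   each continuant of the new weights is a combination of two consecutive
   continuants of the old ones.  This is the whole algebraic content of the
   time evolution of the Q-system. *)
Section Mutation.
Variables (A : idomainType) (x : A) (T : nat) (p q p' q' : nat -> A).
Let s i := p i + q i.
Hypotheses (q_top : q T = 0) (s_neq0 : forall i, (i < T)%N -> s i != 0)
  (mut_p : forall i, (i < T)%N -> p' i.+1 * s i = p i * s i.+1)
  (mut_q : forall i, (i.+1 < T)%N -> q' i.+1 * s i.+1 = q i.+1 * s i.+2).

Lemma cont_mutation i len : (i + len = T)%N ->
  s i * cont x p' q' i.+1 len = p i * cont x p q i.+1 len + q i * cont x p q i.+2 len.-1.
Proof.
elim/ltn_ind: len i => -[|[|l]] IH i hiT.
- by rewrite !mulr1.
- have qi1 : q i.+1 = 0 by rewrite -q_top; congr q; lia.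
  have mut_top : p' i.+1 * s i = p i * p i.+1.
    by rewrite mut_p /s ?qi1 ?addr0 //; lia.
  have -> : s i * cont x p' q' i.+1 1 = s i - x * (p' i.+1 * s i) by rewrite /=; ring.
  by rewrite mut_top /s /=; ring.
- set C'1 := cont x p' q' i.+2 l.+1; set C'2 := cont x p' q' i.+3 l.
  set C1 := cont x p q i.+2 l.+1; set C2 := cont x p q i.+3 l.
  set C3 := cont x p q i.+4 l.-1.
  have IH1 : s i.+1 * C'1 = p i.+1 * C1 + q i.+1 * C2 by apply: IH; lia.
  have IH2 : s i.+2 * C'2 = p i.+2 * C2 + q i.+2 * C3 by apply: IH; lia.
  (* the recursion for C1 also holds at the top of the window, as q_T = 0 *)
  have C1E : C1 = (1 - p i.+2 * x) * C2 - q i.+2 * x * C3.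
    rewrite /C1 /C2 /C3; case: l {IH IH1 IH2 C'1 C'2 C1 C2 C3} hiT => [|l] hiT //.
    by rewrite /= (_ : i.+2 = T) ?q_top; [ring | lia].
  (* after multiplying by s_{i+1}, both primed continuants occur only through
     the left-hand sides of IH1 and IH2 *)
  apply: (mulfI (s_neq0 (_ : i.+1 < T)%N)); first lia.
  have -> : s i.+1 * (s i * cont x p' q' i.+1 l.+2) =
      s i * (s i.+1 * C'1) - x * (p' i.+1 * s i) * (s i.+1 * C'1)
      - x * s i * (q' i.+1 * s i.+1 * C'2).
    by rewrite cont_SS -/C'1 -/C'2; ring.
  rewrite mut_p ?mut_q; try lia.
  rewrite -[q i.+1 * _ * C'2]mulrA IH1 IH2 cont_SS -/C1 -/C2 C1E /s; ring.
Qed.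
End Mutation.

(* The Q-system relation at (a, n + 1). *)
Definition Qrel (R : nat -> nat -> rat) (a n : nat) : Prop :=
  R a n.+2 * R a n = R a n.+1 ^+ 2 + R a.+1 n.+1 * R a.-1 n.+1.

Lemma Qrel_next (R : nat -> nat -> rat) a n : R a n != 0 -> Qrel R a n ->
  R a n.+2 = (R a n.+1 ^+ 2 + R a.+1 n.+1 * R a.-1 n.+1) / R a n.
Proof. by move=> Rn0 <-; rewrite mulfK. Qed.

Lemma Ar_index_cases (r a : nat) :
  (a <= r.+1)%N -> [\/ a = 0%N, a = r.+1 | (0 < a <= r)%N].
Proof.
case: a => [|a] ha; first exact: Or31.
by case: (ltngtP a r) => h; [apply: Or33 | lia | apply: Or32; rewrite h].
Qed.

(* An A_r Q-system with positive initial data stays positive: each new value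
   is a quotient of sums of products of earlier positive values. *)
Lemma Ar_pos (r : nat) (R : nat -> nat -> rat) :
  (forall n, R 0%N n = 1) -> (forall n, R r.+1 n = 1) ->
  (forall a n, (0 < a <= r)%N -> Qrel R a n) ->
  (forall a, (0 < a <= r)%N -> 0 < R a 0%N /\ 0 < R a 1%N) ->
  forall a n, (a <= r.+1)%N -> 0 < R a n.
Proof.
move=> R0 Rtop Rrel Rinit.
suff pos2 n a : (a <= r.+1)%N -> 0 < R a n /\ 0 < R a n.+1.
  by move=> a n /(pos2 n) [].
elim: n a => [|n IH] a ha.
  by have [->|->|/Rinit //] := Ar_index_cases ha; rewrite !(R0, Rtop) ltr01.
split; first by have [] := IH a ha.
have [->|->|har] := Ar_index_cases ha; rewrite ?(R0, Rtop) ?ltr01 //.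
have [Ran Ran1] := IH a ha.
have [_ Ra1] : 0 < R a.+1 n /\ 0 < R a.+1 n.+1 by apply: IH; lia.
have [_ Ram1] : 0 < R a.-1 n /\ 0 < R a.-1 n.+1 by apply: IH; lia.
rewrite (Qrel_next (lt0r_neq0 Ran) (Rrel a n har)).
by rewrite divr_gt0 // addr_gt0 ?exprn_gt0 ?mulr_gt0.
Qed.

(* Continued-fraction weights of a nonvanishing A_r Q-system. *)
Section ArWeights.
Variables (r : nat) (R : nat -> nat -> rat).
Hypotheses (R0 : forall n, R 0%N n = 1) (Rtop : forall n, R r.+1 n = 1)
  (Rrel : forall a n, (0 < a <= r)%N -> Qrel R a n)
  (R_neq0 : forall a n, (a <= r.+1)%N -> R a n != 0).

Definition wp (n a : nat) : rat := R a n.+1 * R a.-1 n / (R a n * R a.-1 n.+1).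
Definition wq (n a : nat) : rat :=
  if (0 < a <= r)%N then R a.+1 n.+1 * R a.-1 n / (R a n * R a n.+1) else 0.

Lemma wp_bottom n : wp n 0 = 1.
Proof. by rewrite /wp /= !R0. Qed.

Lemma wq_bottom n : wq n 0 = 0.
Proof. by []. Qed.

Lemma wq_top n : wq n r.+1 = 0.
Proof. by rewrite /wq ltnn andbF. Qed.

Lemma wsum n a : (a <= r.+1)%N ->
  wp n a + wq n a = R a.-1 n * R a n.+2 / (R a.-1 n.+1 * R a n.+1).
Proof.
move=> ha; have [->|->|har] := Ar_index_cases ha.
- by rewrite wq_bottom addr0 /wp /= !R0.
- by rewrite wq_top addr0 /wp /= !Rtop !mulr1 !mul1r mulrC.
- rewrite /wp /wq har (Qrel_next (R_neq0 _ ha) (Rrel n har)).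
  field; rewrite !R_neq0 //; lia.
Qed.

Let s n a := wp n a + wq n a.

Lemma wsum_neq0 n a : (a <= r.+1)%N -> s n a != 0.
Proof.
move=> ha; rewrite /s wsum // mulf_neq0 ?invr_neq0 ?mulf_neq0 ?R_neq0 //; lia.
Qed.

Lemma wp_next n i : (i < r.+1)%N -> wp n.+1 i.+1 * s n i = wp n i * s n i.+1.
Proof.
move=> hi; rewrite /s !wsum /=; try lia.
rewrite /wp /=; field; rewrite !R_neq0 //; lia.
Qed.

Lemma wq_next n i : (i.+1 < r.+1)%N ->
  wq n.+1 i.+1 * s n i.+1 = wq n i.+1 * s n i.+2.
Proof.
move=> hi; have hir : (0 < i.+1 <= r)%N by lia.
rewrite /s !wsum /=; try lia.
rewrite /wq hir; field; rewrite !R_neq0 //; lia.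
Qed.

Definition qcont (n j len : nat) : {poly rat} :=
  cont 'X (fun a => (wp n a)%:P) (fun a => (wq n a)%:P) j len.

Lemma qcont_mutation n i : (i <= r.+1)%N ->
  (s n i)%:P * qcont n.+1 i.+1 (r.+1 - i) =
  (wp n i)%:P * qcont n i.+1 (r.+1 - i) + (wq n i)%:P * qcont n i.+2 (r - i).
Proof.
move=> hi; rewrite /s polyCD (_ : (r - i = (r.+1 - i).-1)%N); last by lia.
apply: (@cont_mutation _ _ r.+1); last by lia.
- by rewrite wq_top.
- by move=> j hj; rewrite -polyCD polyC_eq0 wsum_neq0 // ltnW.
- by move=> j hj; rewrite -!polyCD -!polyCM wp_next.
- by move=> j hj; rewrite -!polyCD -!polyCM wq_next.
Qed.

(* The full continuant, the denominator of the continued fraction, is a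
   conserved quantity of the time evolution (mutation at i = 0). *)
Lemma qcont_invariant n : qcont n.+1 1 r.+1 = qcont n 1 r.+1.
Proof.
have := qcont_mutation n (leq0n r.+1).
by rewrite /s wp_bottom wq_bottom addr0 polyC0 polyC1 !mul1r mul0r addr0 subn0.
Qed.

Lemma qcont_const n : qcont n 1 r.+1 = qcont 0 1 r.+1.
Proof. by elim: n => // n IH; rewrite qcont_invariant. Qed.

(* The continuant of the window [2, r+1] at time n expands through the one at
   time n+1 (mutation at i = 1). *)
Lemma qcont_step n : (0 < r)%N ->
  qcont n 2 r = qcont n 1 r.+1 + 'X * (wp n.+1 1)%:P * qcont n.+1 2 r.
Proof.
move=> r_gt0.
have wp1 : wp n.+1 1 = s n 1.
  by have := wp_next n (ltn0Sn r); rewrite /s wp_bottom wq_bottom addr0 mulr1 mul1r.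
have unfold1 : qcont n 1 r.+1 =
    (1 - (wp n 1)%:P * 'X) * qcont n 2 r - (wq n 1)%:P * 'X * qcont n 3 r.-1.
  by rewrite /qcont -(prednK r_gt0).
have := qcont_mutation n (ltn0Sn r); rewrite subSS subn0 subn1 => mutation1.
by rewrite wp1 unfold1 -[_ * _ * qcont n.+1 2 r]mulrA mutation1; ring.
Qed.

Lemma R1_step n : R 1 n * wp n 1 = R 1 n.+1.
Proof. by rewrite /wp /= !R0 !mulr1 mulrC divfK // R_neq0. Qed.

(* Generating function of (R_{1,n+i})_i: the conserved continuant times it is
   an explicit polynomial, by telescoping along [qcont_step]. *)
Lemma qcont_gf : (0 < r)%N -> forall k n,
  fps_mul (fun i => (qcont 0 1 r.+1)`_i) (fun i => R 1 (n + i)%N) k =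
  (R 1 n *: qcont 0 1 r.+1 + 'X * (R 1 n.+1 *: qcont n 2 r))`_k.
Proof.
move=> r_gt0; apply: fps_mul_telescope => n; congr (_ + 'X * _).
rewrite (qcont_step n r_gt0) qcont_const -(R1_step n.+1) -!mul_polyC.
ring.
Qed.

(* With unit initial data all weights at time 0 are 1, so the continuants at
   time 0 are the polynomials P_m. *)
Lemma qcont_unit_data : (forall a, (0 < a <= r)%N -> R a 0 = 1 /\ R a 1 = 1) ->
  forall j len, (0 < j)%N -> (j + len <= r.+2)%N -> qcont 0 j len = chebP len.
Proof.
move=> Rinit j len j_gt0 hlen.
have unit a : (a <= r.+1)%N -> R a 0 = 1 /\ R a 1 = 1.
  by move=> ha; have [->|->|/Rinit //] := Ar_index_cases ha; rewrite !(R0, Rtop).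
rewrite /qcont -(cont_unit_weights j len); apply: cont_ext => i hi.
- have [[Ri0 Ri1] [Rj0 Rj1]] :
      (R i 0 = 1 /\ R i 1 = 1) /\ (R i.-1 0 = 1 /\ R i.-1 1 = 1).
    by split; apply: unit; lia.
  by rewrite /wp Ri0 Ri1 Rj0 Rj1 divff ?polyC1.
- have hir : (0 < i <= r)%N by lia.
  have [[Ri0 Ri1] [[Rj0 _] [_ Rk1]]] : (R i 0 = 1 /\ R i 1 = 1) /\
      (R i.-1 0 = 1 /\ R i.-1 1 = 1) /\ (R i.+1 0 = 1 /\ R i.+1 1 = 1).
    by split; [|split]; apply: unit; lia.
  by rewrite /wq hir Ri0 Ri1 Rj0 Rk1 divff ?polyC1.
Qed.
End ArWeights.

Lemma Ar_generating_function (r : nat) (R : nat -> nat -> rat) : (0 < r)%N ->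
  (forall n, R 0%N n = 1) -> (forall n, R r.+1 n = 1) ->
  (forall a n, (0 < a <= r)%N -> Qrel R a n) ->
  (forall a, (0 < a <= r)%N -> R a 0%N = 1 /\ R a 1%N = 1) ->
  forall k, fps_mul (fun i => (chebP r.+1)`_i) (R 1%N) k =
            (chebP r.+1 + 'X * chebP r)`_k.
Proof.
move=> r_gt0 R0 Rtop Rrel Rinit k.
have R_neq0 a n : (a <= r.+1)%N -> R a n != 0.
  move=> ha; apply/lt0r_neq0/(Ar_pos R0 Rtop Rrel) => // b /Rinit [-> ->].
  by rewrite ltr01.
have [R10 R11] : R 1%N 0%N = 1 /\ R 1%N 1%N = 1 by apply: Rinit; lia.
have := qcont_gf R0 Rtop Rrel R_neq0 r_gt0 k 0.
by rewrite !(qcont_unit_data R0 Rtop Rinit) // R10 R11 !scale1r.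
Qed.

Fixpoint unitQ_pair (r n : nat) : (nat -> rat) * (nat -> rat) :=
  match n with
  | 0 => (fun _ => 1, fun _ => 1)
  | n'.+1 => let: (u, v) := unitQ_pair r n' in
     (v, fun a => if (0 < a <= r)%N then (v a ^+ 2 + v a.+1 * v a.-1) / u a else 1)
  end.
Definition unitQ (r a n : nat) : rat := (unitQ_pair r n).1 a.

Lemma unitQ_SS r a n : unitQ r a n.+2 =
  if (0 < a <= r)%N then (unitQ r a n.+1 ^+ 2 + unitQ r a.+1 n.+1 * unitQ r a.-1 n.+1)
    / unitQ r a n else 1.
Proof. by rewrite /unitQ /=; case: (unitQ_pair r n). Qed.

Lemma unitQ_pos r a n : 0 < unitQ r a n.
Proof.
elim/ltn_ind: n a => -[|[|n]] IH a //; rewrite unitQ_SS.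
by case: ifP => _; rewrite ?ltr01 // divr_gt0 ?addr_gt0 ?exprn_gt0 ?mulr_gt0 ?IH.
Qed.

Lemma unitQ_bottom r n : unitQ r 0 n = 1.
Proof. by case: n => [|[|n]] //; rewrite unitQ_SS. Qed.

Lemma unitQ_top r n : unitQ r r.+1 n = 1.
Proof. by case: n => [|[|n]] //; rewrite unitQ_SS ltnn andbF. Qed.

Lemma unitQ_rel r a n : (0 < a <= r)%N -> Qrel (unitQ r) a n.
Proof. by move=> har; rewrite /Qrel unitQ_SS har divfK // lt0r_neq0 ?unitQ_pos. Qed.

(* Light cone: a solution of the Q-relations for 0 < a <= N with unit initial
   data agrees with the A_N unit solution at all (a, n) with a + n <= N + 1,
   since the relation at (a, n) only involves indices inside the cone. *)
Lemma cone_agreement (N : nat) (R : nat -> nat -> rat) :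
  (forall n, R 0%N n = 1) -> (forall a n, (0 < a <= N)%N -> Qrel R a n) ->
  (forall a, (0 < a <= N.+1)%N -> R a 0%N = 1 /\ R a 1%N = 1) ->
  forall a n, (a + n <= N.+1)%N -> R a n = unitQ N a n.
Proof.
move=> R0 Rrel Rinit a n; elim/ltn_ind: n a => -[|[|n]] IH [|a] han;
  rewrite ?R0 ?unitQ_bottom //.
1, 2: by have /Rinit [R_a0 R_a1] : (0 < a.+1 <= N.+1)%N by lia.
have haN : (0 < a.+1 <= N)%N by lia.
have Ran : R a.+1 n = unitQ N a.+1 n by apply: IH; lia.
have Ran0 : R a.+1 n != 0 by rewrite Ran lt0r_neq0 ?unitQ_pos.
by rewrite unitQ_SS haN (Qrel_next Ran0 (Rrel _ n haN)) Ran !IH //; lia.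
Qed.

Section HalfInfinite.
Variable R : nat -> nat -> rat.
Hypotheses (R0 : forall n, R 0%N n = 1) (Rrel : forall a n, (0 < a)%N -> Qrel R a n)
  (Rinit : forall a, (0 < a)%N -> R a 0%N = 1 /\ R a 1%N = 1).

Lemma Ainf_truncation M N : (0 < N)%N -> (M <= N.+1)%N ->
  'X^M %| chebP N.+1 * \poly_(i < M) R 1%N i - (chebP N.+1 + 'X * chebP N).
Proof.
move=> N_gt0 MN; apply/dvdXnP => j hj; apply/eqP; rewrite coefB subr_eq0; apply/eqP.
rewrite -fps_mul_coefM -(Ar_generating_function N_gt0 (unitQ_bottom N) (unitQ_top N)
  (@unitQ_rel N)) //.
apply: fps_mul_eq => // i hi; rewrite coef_poly ifT; last by lia.
apply: cone_agreement => //; last by lia.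
- by move=> a n /andP[a_gt0 _]; apply: Rrel.
- by move=> a /andP[a_gt0 _]; apply: Rinit.
Qed.

(* With G = sum_n R_{1,n} t^n, the series
   V = (G-1)(1-t-(G-1)) - t vanishes, and (3 - t - 2G)^2 = 1 - 6t + t^2 - 4V.
   Modulo t^(k+1), V is obtained by eliminating P_{k+1}, P_{k+2}, P_{k+3} from
   the truncated identities for N = k+1 and N = k+2. *)
Lemma Ainf_square k :
  fps_mul (fun n => (3%:P - 'X : {poly rat})`_n - 2 * R 1%N n)
          (fun n => (3%:P - 'X : {poly rat})`_n - 2 * R 1%N n) k
  = (1 - 6%:P * 'X + 'X ^+ 2 : {poly rat})`_k.
Proof.
set M := k.+1; set g := \poly_(i < M) R 1%N i.
set P0 := chebP M; set P1 := chebP M.+1; set P2 := chebP M.+2.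
set V := (g - 1) * (1 - 'X - (g - 1)) - 'X.
set W := 3%:P - 'X - 2%:P * g.
have D1 : 'X^M %| P1 * g - (P1 + 'X * P0) := Ainf_truncation (ltn0Sn k) (leqnSn M).
have D2 : 'X^M %| P2 * g - (P2 + 'X * P1) :=
  Ainf_truncation (ltn0Sn M) (leqW (leqnSn M)).
have XV : 'X^M %| V.
  apply: (@dvdXn_cancel _ (P2 * P1)).
    by rewrite coefM big_ord1 !chebP_coef0 mulr1 oner_neq0.
  have -> : P2 * P1 * V = (P2 * g - (P2 + 'X * P1)) * (P2 - (P1 * g - (P1 + 'X * P0)))
      - 'X * P1 * (P1 * g - (P1 + 'X * P0)).
    by rewrite /P2 chebP_rec -/P1 -/P0 /V; ring.
  by apply: dvdp_sub; [apply: dvdp_mulr | apply: dvdp_mull].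
have WW : W * W = 1 - 6%:P * 'X + 'X ^+ 2 - 4%:P * V by rewrite /W /V; ring.
rewrite (@fps_mul_eq _ (fun i => W`_i) _ (fun i => W`_i)) ?fps_mul_coefM; last first.
- by move=> i hi; rewrite /W !coefB coefCM coef_poly ifT //; lia.
- by move=> i hi; rewrite /W !coefB coefCM coef_poly ifT //; lia.
by rewrite WW coefB coefCM (dvdXnP _ _ XV) // mulr0 subr0.
Qed.
End HalfInfinite.

Lemma nat_time_Qrel (R : nat -> int -> rat) (a : nat) :
  (forall n : int, R a (n + 1) * R a (n - 1) = R a n ^+ 2 + R a.+1 n * R a.-1 n) ->
  forall n : nat, Qrel (fun b (m : nat) => R b m) a n.
Proof.
move=> rel n; have := rel n.+1%:Z.
have -> : (n.+1%:Z - 1 = n :> int)%R by rewrite -addn1 PoszD addrK.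
by rewrite -PoszD addn1.
Qed.

Theorem mainTheorem15 :
  (forall (r : nat) (R : nat -> int -> rat), (1 <= r)%N ->
     is_Ar_Qsystem r R ->
     (forall a : nat, (1 <= a <= r)%N -> R a 0 = 1 /\ R a 1 = 1) ->
     (* P_{r+1}(t) * sum_n R_{1,n} t^n = P_{r+1}(t) + t P_r(t) *)
     forall k : nat,
       fps_mul (fun i => (chebP r.+1)`_i) (fun n => R 1%N (Posz n)) k
       = (chebP r.+1 + 'X * chebP r)`_k)
  /\
  (forall R : nat -> int -> rat,
     is_Ainf_Qsystem R ->
     (forall a : nat, (1 <= a)%N -> R a 0 = 1 /\ R a 1 = 1) ->
     (* 3 - t - 2 sum_n R_{1,n} t^n = sqrt(1 - 6t + t^2) *)
     is_fps_sqrt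
       (fun n => ((3%:P - 'X : {poly rat})`_n - 2 * R 1%N (Posz n)))
       (fun n => (1 - 6%:P * 'X + 'X ^+ 2 : {poly rat})`_n)).
Proof.
split.
- move=> r R r_gt0 [R0 [Rtop Rrel]] Rinit.
  apply: (@Ar_generating_function r (fun a (n : nat) => R a n)) => // a n ha.
  exact: (nat_time_Qrel (fun n => Rrel a n ha)).
- move=> R [R0 Rrel] Rinit; split.
    by rewrite coefB coefC coefX (Rinit 1%N isT).1.
  apply: (@Ainf_square (fun a (n : nat) => R a n)) => // a n ha.
  exact: (nat_time_Qrel (fun n => Rrel a n ha)).
Qed.
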